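(* Let $C$ be a Plotkin-optimal projective linear code over $\mathbb{Z}_4$ of type $4^{k_1}2^{k_2}$, length $n$ and minimum Lee distance $n$, with exactly two nonzero Lee weights $m$ and $n$. Let $a,b$ be nonnegative integers, not both zero. Then there exists a Plotkin-optimal projective linear code $C'$ over $\mathbb{Z}_4$ of type $4^{k_1+a}2^{k_2+b}$, length $4^a2^bn$ and minimum Lee distance $4^a2^bn$, with exactly two nonzero Lee weights $w_1=4^a2^bm$ and $w_2=4^a2^bn$, such that $A_{w_1}(C')=A_m(C)$ and $A_{w_2}(C')=4^{k_1+a}2^{k_2+b}-1-A_m(C)$.
   Context: A linear code of length $n$ over $\mathbb{Z}_4$ is a $\mathbb{Z}_4$-submodule of $\mathbb{Z}_4^n$, of type $4^{k_1}2^{k_2}$ if isomorphic to $\mathbb{Z}_4^{k_1}\times\mathbb{Z}_2^{k_2}$. Lee weight: $w_L(0)=0,w_L(1)=1,w_L(2)=2,w_L(3)=1$, additive on vectors; minimum Lee distance is the minimum nonzero Lee weight. Plotkin-optimal means $d_L=\lfloor\frac{|C|}{|C|-1}\cdot\text{length}\rfloor$; projective means the dual (with respect to $\sum x_iy_i\in\mathbb{Z}_4$) has minimum Lee distance at least $3$. $A_w(D)$ is the number of codewords of $D$ of Lee weight $w$. *)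

From HB Require Import structures.
From mathcomp Require Import all_boot all_order all_algebra.
Set Implicit Arguments. Unset Strict Implicit. Unset Printing Implicit Defensive.
Import GRing.Theory.
Local Open Scope ring_scope.

Definition leeZ4 (x : 'Z_4) : nat :=
  match val x with 0 => 0 | 1 => 1 | 2 => 2 | _ => 1 end%N.

Definition lee_wt (n : nat) (v : 'rV['Z_4]_n) : nat := (\sum_(i < n) leeZ4 (v ord0 i))%N.

Definition Z4_linear (n : nat) (C : {set 'rV['Z_4]_n}) : Prop :=
  [/\ 0 \in C,
      (forall x y, x \in C -> y \in C -> x + y \in C) &
      (forall (c : 'Z_4) x, x \in C -> c *: x \in C)].

(* C is of type 4^k1 2^k2: C is isomorphic (as a group, equivalently as a
   Z4-module) to Z4^k1 x Z2^k2. *)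
Definition code_type (n : nat) (C : {set 'rV['Z_4]_n}) (k1 k2 : nat) : Prop :=
  exists f : 'rV['Z_4]_k1 * 'rV['Z_2]_k2 -> 'rV['Z_4]_n,
    [/\ forall x y, f (x + y) = f x + f y,
        injective f &
        forall v, v \in C <-> exists x, f x = v].

Definition min_lee_dist (n : nat) (C : {set 'rV['Z_4]_n}) (d : nat) : Prop :=
  (exists2 c, c \in C & c != 0 /\ lee_wt c = d) /\
  (forall c, c \in C -> c != 0 -> (d <= lee_wt c)%N).

Definition plotkin_optimal (n : nat) (C : {set 'rV['Z_4]_n}) : Prop :=
  exists d, min_lee_dist C d /\ d = (#|C| * n %/ (#|C| - 1))%N.

Definition dual_code (n : nat) (C : {set 'rV['Z_4]_n}) : {set 'rV['Z_4]_n} :=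
  [set y : 'rV['Z_4]_n | [forall x in C, (\sum_(i < n) x ord0 i * y ord0 i) == 0]].

Definition projective (n : nat) (C : {set 'rV['Z_4]_n}) : Prop :=
  forall y, y \in dual_code C -> y != 0 -> (3 <= lee_wt y)%N.

Definition two_weights (n : nat) (C : {set 'rV['Z_4]_n}) (w1 w2 : nat) : Prop :=
  [/\ w1 <> w2,
      (forall c, c \in C -> c != 0 -> lee_wt c = w1 \/ lee_wt c = w2),
      (exists2 c, c \in C & c != 0 /\ lee_wt c = w1) &
      (exists2 c, c \in C & c != 0 /\ lee_wt c = w2)].

Definition A_w (n : nat) (D : {set 'rV['Z_4]_n}) (w : nat) : nat :=
  #|[set c in D | lee_wt c == w]|.

(* Fix s in {1, 2} and r = 4 / s, and send c in C and u in Z4 to the word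
   (c + s u j 1)_(j < r) of length r n, where 1 is the all-one vector.  If
   s u = 0 this is r copies of c, of Lee weight r wt(c); otherwise every
   coordinate runs through a whole coset x + s Z4, whose Lee weights add up to
   r, so the word has weight r n.  Hence the weights m, n become r m, r n, the
   number of words of weight r m is unchanged, and |C| is multiplied by r,
   which preserves |C| >= n + 2, i.e. Plotkin optimality for minimum distance
   n.  The column sums of a dual word of the new code form a dual word of C;
   if the dual word has Lee weight <= 2 these sums vanish, so the word lives
   in a single column, and orthogonality to the word with c = 0, u = 1 rules
   this out.  Iterating a times with s = 1 and b times with s = 2 gives the
   theorem. *)

From HB Require Import structures.
From mathcomp Require Import all_boot all_order all_algebra.
From mathcomp Require Import ring zify.
Set Implicit Arguments. Unset Strict Implicit. Unset Printing Implicit Defensive.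
Import GRing.Theory.
Local Open Scope ring_scope.

Ltac case_Z4 x := case: x => [[|[|[|[|?]]]] ?] //.

Lemma leeZ4_eq0 (x : 'Z_4) : leeZ4 x = 0%N -> x = 0.
Proof. by case_Z4 x; move=> _; apply/val_inj. Qed.

Lemma leeZ4_addr (x y : 'Z_4) : (leeZ4 (x + y)%R <= leeZ4 x + leeZ4 y)%N.
Proof. by case_Z4 x; case_Z4 y. Qed.

Lemma leeZ4_sum (I : finType) (F : I -> 'Z_4) :
  (leeZ4 (\sum_i F i)%R <= \sum_i leeZ4 (F i))%N.
Proof.
elim/big_ind2: _ => // x1 n1 x2 n2 le1 le2.
exact: leq_trans (leeZ4_addr _ _) (leq_add le1 le2).
Qed.

Lemma lee_wt0 n : lee_wt (0 : 'rV['Z_4]_n) = 0%N.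
Proof. by rewrite /lee_wt big1 // => i _; rewrite mxE. Qed.

Lemma lee_wt_eq0 n (v : 'rV['Z_4]_n) : lee_wt v = 0%N -> v = 0.
Proof.
move/eqP; rewrite /lee_wt sum_nat_eq0 => /forallP v0.
by apply/rowP => i; rewrite mxE; apply/leeZ4_eq0/eqP/v0.
Qed.

Lemma big_mxvec_index (R : Type) (idx : R) (op : Monoid.com_law idx) m n
    (F : 'I_(m * n) -> R) :
  \big[op/idx]_(i < m * n) F i =
  \big[op/idx]_(j < m) \big[op/idx]_(k < n) F (mxvec_index j k).
Proof.
rewrite pair_bigA (reindex (uncurry (@mxvec_index m n))) /=.
  by apply: eq_bigr => -[].
have [g gK Kg] := @curry_mxvec_bij m n.
by exists g => x _; [apply: gK | apply: Kg].
Qed.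

Lemma lee_wt_mxvec m n (A : 'M['Z_4]_(m, n)) :
  lee_wt (mxvec A) = (\sum_(j < m) \sum_(k < n) leeZ4 (A j k))%N.
Proof.
rewrite /lee_wt big_mxvec_index.
by apply: eq_bigr => j _; apply: eq_bigr => k _; rewrite mxvecE.
Qed.

Lemma dot_mxvec m n (A B : 'M['Z_4]_(m, n)) :
  \sum_(i < m * n) mxvec A 0 i * mxvec B 0 i =
  \sum_(j < m) \sum_(k < n) A j k * B j k.
Proof.
rewrite big_mxvec_index.
by apply: eq_bigr => j _; apply: eq_bigr => k _; rewrite !mxvecE.
Qed.

Lemma card_code_type n (C : {set 'rV['Z_4]_n}) k1 k2 :
  code_type C k1 k2 -> #|C| = (4 ^ k1 * 2 ^ k2)%N.
Proof.
case=> f [_ finj fC].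
have -> : C = f @: setT.
  apply/setP => v; apply/idP/imsetP => [/fC[x <-]|[x _ ->]]; first by exists x.
  by apply/fC; exists x.
by rewrite card_imset // cardsT card_prod !card_mx !card_ord !mul1n.
Qed.

Lemma min_lee_dist_gt0 n (C : {set 'rV['Z_4]_n}) d : min_lee_dist C d -> (0 < d)%N.
Proof.
case=> -[c _ [c0 <-]] _; rewrite lt0n; apply: contra c0 => /eqP/lee_wt_eq0 ->.
exact: eqxx.
Qed.

Lemma min_lee_dist_unique n (C : {set 'rV['Z_4]_n}) d d' :
  min_lee_dist C d -> min_lee_dist C d' -> d = d'.
Proof.
case=> -[c Cc [c0 <-]] min_d [[c' Cc' [c'0 <-]] min_d'].
by apply/eqP; rewrite eqn_leq min_d // min_d'.
Qed.

Lemma mulSn_divn_eq (K d : nat) :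
  (0 < d)%N -> ((K.+1 * d) %/ K == d)%N = (d < K)%N.
Proof.
move=> d_gt0; have [->|K_gt0] := posnP K.
  by rewrite divn0 ltn0 eq_sym; case: d d_gt0.
rewrite mulSnr [(K * d)%N]mulnC divnMDl // -[X in (_ == X)%N]addn0 eqn_add2l.
by rewrite -leqn0 leqNgt divn_gt0 // -ltnNge.
Qed.

Lemma plotkin_optimalE n (C : {set 'rV['Z_4]_n}) :
  min_lee_dist C n -> plotkin_optimal C <-> (n.+2 <= #|C|)%N.
Proof.
move=> md_n; have n_gt0 := min_lee_dist_gt0 md_n.
have [K cardC] : exists K, #|C| = K.+1.
  case: md_n => -[c Cc _] _; exists #|C|.-1.
  by rewrite prednK //; apply/card_gt0P; exists c.
rewrite /plotkin_optimal cardC subSS subn0 ltnS; split.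
  case=> d [md_d]; rewrite -(min_lee_dist_unique md_n md_d) => /esym/eqP.
  by rewrite mulSn_divn_eq.
by move=> lt_nK; exists n; split=> //; apply/esym/eqP; rewrite mulSn_divn_eq.
Qed.

Lemma card_two_weights n (C : {set 'rV['Z_4]_n}) w1 w2 :
  Z4_linear C -> two_weights C w1 w2 -> #|C| = (1 + A_w C w1 + A_w C w2)%N.
Proof.
case=> C0 _ _ [w12 wtC [c1 _ [c10 wt_c1]] [c2 _ [c20 wt_c2]]].
have nz_wt (c : 'rV['Z_4]_n) w : c != 0 -> lee_wt c = w -> w != 0%N.
  by move=> c0 <-; apply: contra c0 => /eqP/lee_wt_eq0 ->.
rewrite (cardsD1 0 C) C0 -addnA -(cardsID [set c | lee_wt c == w1]).
congr (_ + (_ + _))%N; apply: eq_card => c; rewrite !inE.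
  have [->|c0] //= := eqVneq c 0.
  by rewrite lee_wt0 eq_sym (negbTE (nz_wt _ _ c10 wt_c1)) andbF.
have [->|c0] := eqVneq c 0.
  by rewrite /= andbF lee_wt0 eq_sym (negbTE (nz_wt _ _ c20 wt_c2)) andbF.
have [Cc|] := boolP (c \in C); last by rewrite !andbF.
case: (wtC c Cc c0) => ->; rewrite eqxx /=; first by apply/esym/eqP.
by rewrite andbT; apply/eqP => /esym.
Qed.

(* [ptw_card] is Plotkin optimality in the form that survives the extensions
   below, see [plotkin_optimalE]. *)
Record plotkin_two_weight n (C : {set 'rV['Z_4]_n}) k1 k2 m A : Prop := {
  ptw_linear : Z4_linear C;
  ptw_type : code_type C k1 k2;
  ptw_projective : projective C;
  ptw_min_dist : min_lee_dist C n;
  ptw_two_weights : two_weights C m n;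
  ptw_A_w : A_w C m = A;
  ptw_card : (n.+2 <= #|C|)%N }.

Section Extension.

Variables (r : nat) (s : 'Z_4).
Hypothesis r_gt1 : (1 < r)%N.
Hypothesis lee_line : forall x u : 'Z_4, s * u != 0 ->
  (\sum_(j < r) leeZ4 (x + s * u * j%:R)%R)%N = r.
(* What a nonzero dual word of the extension supported on a single column would
   have to violate: its column sums to 0, and orthogonality to the word with
   c = 0, u = 1 forces s * sum_j j y_j = 0. *)
Hypothesis lee_dual_column : forall y : 'I_r -> 'Z_4,
  \sum_j y j = 0 -> (exists j, y j != 0) ->
  (2 <= \sum_j leeZ4 (y j))%N /\
  ((\sum_j leeZ4 (y j))%N = 2%N -> s * \sum_(j < r) j%:R * y j != 0).

Definition ext_word N (c : 'rV['Z_4]_N) (u : 'Z_4) : 'rV['Z_4]_(r * N) :=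
  mxvec (\matrix_(j < r, k < N) (c 0 k + s * u * j%:R)).

Definition ext_code N (C : {set 'rV['Z_4]_N}) : {set 'rV['Z_4]_(r * N)} :=
  [set ext_word c u | c in C, u in [set: 'Z_4]].

Lemma ext_word_in_code N (C : {set 'rV['Z_4]_N}) c u :
  c \in C -> ext_word c u \in ext_code C.
Proof. by move=> Cc; apply: imset2_f; rewrite ?inE. Qed.

Lemma ext_wordD N (c c' : 'rV_N) u u' :
  ext_word c u + ext_word c' u' = ext_word (c + c') (u + u').
Proof. by rewrite -linearD; congr mxvec; apply/matrixP => j k; rewrite !mxE; ring. Qed.

Lemma ext_wordZ N (c : 'rV_N) u a : a *: ext_word c u = ext_word (a *: c) (a * u).
Proof. by rewrite -linearZ; congr mxvec; apply/matrixP => j k; rewrite !mxE; ring. Qed.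

Lemma ext_word0 N : ext_word (0 : 'rV_N) 0 = 0.
Proof.
rewrite -(linear0 (@mxvec _ r N)); congr mxvec.
by apply/matrixP => j k; rewrite !mxE; ring.
Qed.

Lemma eq_ext_word N (c : 'rV_N) u u' : s * u = s * u' -> ext_word c u = ext_word c u'.
Proof. by move=> su; congr mxvec; apply/matrixP => j k; rewrite !mxE su. Qed.

Lemma ext_word_inj N (c c' : 'rV_N) u u' : (0 < N)%N ->
  ext_word c u = ext_word c' u' -> c = c' /\ s * u = s * u'.
Proof.
move=> N_gt0 /(can_inj mxvecK)/matrixP e.
have row0 k : c 0 k = c' 0 k.
  by move: (e (Ordinal (ltnW r_gt1)) k); rewrite !mxE /= !mulr0 !addr0.
split; first by apply/rowP => k; rewrite row0.
by move: (e (Ordinal r_gt1) (Ordinal N_gt0)); rewrite !mxE /= !mulr1 row0 => /addrI.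
Qed.

Lemma lee_wt_ext_word_const N (c : 'rV_N) u :
  s * u = 0 -> lee_wt (ext_word c u) = (r * lee_wt c)%N.
Proof.
move=> su0; rewrite lee_wt_mxvec exchange_big big_distrr /=.
apply: eq_bigr => k _; under eq_bigr => j _ do rewrite mxE su0 mul0r addr0.
by rewrite sum_nat_const card_ord mulnC.
Qed.

Lemma lee_wt_ext_word_line N (c : 'rV_N) u :
  s * u != 0 -> lee_wt (ext_word c u) = (r * N)%N.
Proof.
move=> su0; rewrite lee_wt_mxvec exchange_big /=.
transitivity (\sum_(k < N) r)%N; last by rewrite sum_nat_const card_ord mulnC.
apply: eq_bigr => k _; apply: etrans (lee_line (c 0 k) su0).
by apply: eq_bigr => j _; rewrite mxE.
Qed.

Lemma Z4_linear_ext N (C : {set 'rV['Z_4]_N}) : Z4_linear C -> Z4_linear (ext_code C).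
Proof.
case=> C0 CD CZ; split.
- by rewrite -ext_word0 ext_word_in_code.
- move=> _ _ /imset2P[c u Cc _ ->] /imset2P[c' u' Cc' _ ->].
  by rewrite ext_wordD ext_word_in_code ?CD.
- by move=> a _ /imset2P[c u Cc _ ->]; rewrite ext_wordZ ext_word_in_code ?CZ.
Qed.

(* [g] identifies the parameters of the extension with those of C together
   with a shift u, the latter only up to the kernel of multiplication by s. *)
Lemma code_type_ext N (C : {set 'rV['Z_4]_N}) k1 k2 k1' k2'
    (g : 'rV['Z_4]_k1' * 'rV['Z_2]_k2' -> ('rV['Z_4]_k1 * 'rV['Z_2]_k2) * 'Z_4) :
  (0 < N)%N -> code_type C k1 k2 ->
  (forall p q, (g (p + q)).1 = (g p).1 + (g q).1 /\
               s * (g (p + q)).2 = s * ((g p).2 + (g q).2)) ->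
  (forall p q, (g p).1 = (g q).1 -> s * (g p).2 = s * (g q).2 -> p = q) ->
  (forall x u, exists p, (g p).1 = x /\ s * (g p).2 = s * u) ->
  code_type (ext_code C) k1' k2'.
Proof.
move=> N_gt0 [f [fD finj fC]] gD ginj gsurj.
exists (fun p => ext_word (f (g p).1) (g p).2); split.
- by move=> p q; have [-> su] := gD p q; rewrite ext_wordD -fD; apply: eq_ext_word.
- by move=> p q /(ext_word_inj N_gt0) [/finj]; apply: ginj.
move=> v; split=> [/imset2P[_ u /fC[x <-] _ ->]|[p <-]].
  by have [p [<- su]] := gsurj x u; exists p; apply: eq_ext_word.
by apply: ext_word_in_code; apply/fC; exists (g p).1.
Qed.

Definition col_sums m N (Y : 'M['Z_4]_(m, N)) : 'rV['Z_4]_N := \row_k \sum_j Y j k.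

Lemma lee_wt_col_sums m N (Y : 'M['Z_4]_(m, N)) :
  (lee_wt (col_sums Y) <= lee_wt (mxvec Y))%N.
Proof.
rewrite lee_wt_mxvec exchange_big /=; apply: leq_sum => k _; rewrite mxE.
exact: leeZ4_sum.
Qed.

Section Dual.

Variables (N : nat) (C : {set 'rV['Z_4]_N}) (Y : 'M['Z_4]_(r, N)).
Hypothesis dual_Y : mxvec Y \in dual_code (ext_code C).

Lemma ext_dual_orth c u : c \in C ->
  \sum_(j < r) \sum_(k < N) (c 0 k + s * u * j%:R) * Y j k = 0.
Proof.
move=> Cc; move: dual_Y; rewrite inE => /forallP/(_ (ext_word c u)).
rewrite ext_word_in_code //= dot_mxvec => /eqP orth; rewrite -[RHS]orth.
by apply: eq_bigr => j _; apply: eq_bigr => k _; rewrite mxE.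
Qed.

Lemma col_sums_dual : col_sums Y \in dual_code C.
Proof.
rewrite inE; apply/forallP => c; apply/implyP => Cc; apply/eqP.
rewrite -[RHS](ext_dual_orth 0 Cc) exchange_big /=; apply: eq_bigr => k _.
by rewrite mxE mulr_sumr; apply: eq_bigr => j _; rewrite mulr0 mul0r addr0.
Qed.

End Dual.

Lemma projective_ext N (C : {set 'rV['Z_4]_N}) :
  Z4_linear C -> projective C -> projective (ext_code C).
Proof.
case=> C0 _ _ projC y; rewrite -[y]vec_mxK; move: (vec_mx y) => {y} Y dual_Y Y0.
rewrite leqNgt; apply/negP => wt_Y.
have sums0 : col_sums Y = 0.
  apply/eqP; apply: contraT => /(projC _ (col_sums_dual dual_Y)).
  move=> wt_sums; have := leq_trans wt_sums (lee_wt_col_sums Y).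
  by rewrite leqNgt wt_Y.
have colY0 k : \sum_j Y j k = 0 by move/rowP: sums0 => /(_ k); rewrite !mxE.
have [j0 [k0 Yjk0]] : exists j k, Y j k != 0.
  by apply/matrix0Pn; rewrite -mxvec_eq0.
have [wt_col2 dual_col] := lee_dual_column (colY0 k0) (ex_intro _ j0 Yjk0).
move: wt_Y; rewrite lee_wt_mxvec exchange_big (bigD1 k0) //= ltnS => wt_Y.
have wt_col : (\sum_j leeZ4 (Y j k0))%N = 2%N.
  by apply/eqP; rewrite eqn_leq wt_col2 andbT; apply: leq_trans (leq_addr _ _) wt_Y.
have Y_other : forall k, k != k0 -> forall j, Y j k = 0.
  move: wt_Y; rewrite wt_col -[X in (_ <= X)%N]addn0 leq_add2l leqn0 sum_nat_eq0.
  move=> /forallP wt0 k k_neq j.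
  by move: (wt0 k); rewrite k_neq sum_nat_eq0 => /forallP/(_ j)/eqP/leeZ4_eq0.
apply/negP: (dual_col wt_col); rewrite negbK; apply/eqP.
rewrite -[RHS](ext_dual_orth dual_Y 1 C0) exchange_big (bigD1 k0) //=.
rewrite [X in _ + X]big1 ?addr0.
  by rewrite mulr_sumr; apply: eq_bigr => j _; rewrite mxE; ring.
by move=> k /Y_other Yk0; apply: big1 => j _; rewrite Yk0 mulr0.
Qed.

Section TwoWeights.

Variables (N m : nat) (C : {set 'rV['Z_4]_N}).
Hypotheses (N_gt0 : (0 < N)%N) (two_wt : two_weights C m N).

Lemma ext_word_const_eq0 (c : 'rV_N) : (ext_word c 0 == 0) = (c == 0).
Proof.
apply/eqP/eqP => [|->]; last exact: ext_word0.
by rewrite -(ext_word0 N) => /(ext_word_inj N_gt0) [].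
Qed.

Lemma lee_wt_ext_code x : x \in ext_code C -> x != 0 ->
  lee_wt x = (r * m)%N \/ lee_wt x = (r * N)%N.
Proof.
case/imset2P => c u Cc _ -> x0.
have [su0|su0] := eqVneq (s * u) 0; last by right; apply: lee_wt_ext_word_line.
rewrite (@eq_ext_word _ _ u 0) ?mulr0 // in x0 *.
rewrite lee_wt_ext_word_const ?mulr0 //; rewrite ext_word_const_eq0 in x0.
by case: two_wt => _ /(_ c Cc x0) [] ->; [left | right].
Qed.

Lemma two_weights_ext : two_weights (ext_code C) (r * m) (r * N).
Proof.
have r_gt0 := ltnW r_gt1.
case: two_wt => mN _ [c1 Cc1 [c10 wt1]] [c2 Cc2 [c20 wt2]]; split.
- by move/eqP; rewrite eqn_pmul2l // => /eqP.
- exact: lee_wt_ext_code.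
- exists (ext_word c1 0); rewrite ?ext_word_in_code ?ext_word_const_eq0 //.
  by rewrite lee_wt_ext_word_const ?mulr0 ?wt1.
- exists (ext_word c2 0); rewrite ?ext_word_in_code ?ext_word_const_eq0 //.
  by rewrite lee_wt_ext_word_const ?mulr0 ?wt2.
Qed.

Lemma min_lee_dist_ext : min_lee_dist C N -> min_lee_dist (ext_code C) (r * N).
Proof.
case=> _ min_N; have [_ _ [c1 Cc1 [c10 wt1]] _] := two_wt; split.
  by have [_ _ _ ?] := two_weights_ext.
move=> x Cx x0; have [->|->] // := lee_wt_ext_code Cx x0.
by rewrite leq_mul2l -wt1 min_N ?orbT.
Qed.

Lemma A_w_ext : A_w (ext_code C) (r * m) = A_w C m.
Proof.
have r_gt0 := ltnW r_gt1; have [mN _ _ _] := two_wt; rewrite /A_w.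
have -> : [set x : 'rV_(r * N) in ext_code C | lee_wt x == (r * m)%N] =
          (fun c => ext_word c 0) @: [set c in C | lee_wt c == m].
  apply/setP => x; rewrite inE; apply/andP/imsetP => [[]|[c]].
    case/imset2P => c u Cc _ ->.
    have [su0|su0] := eqVneq (s * u) 0.
      rewrite (@eq_ext_word _ _ u 0) ?mulr0 // lee_wt_ext_word_const ?mulr0 //.
      by rewrite eqn_pmul2l // => wt_c; exists c; rewrite ?inE ?Cc.
    by rewrite lee_wt_ext_word_line // eqn_pmul2l // eq_sym => /eqP.
  rewrite inE => /andP[Cc /eqP wt_c] ->.
  by rewrite ext_word_in_code // lee_wt_ext_word_const ?mulr0 ?wt_c.
rewrite card_imset //.
by move=> c c' /(ext_word_inj N_gt0) [].
Qed.

End TwoWeights.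

Lemma plotkin_two_weight_ext N (C : {set 'rV['Z_4]_N}) k1 k2 k1' k2' m A :
  plotkin_two_weight C k1 k2 m A -> code_type (ext_code C) k1' k2' ->
  (4 ^ k1' * 2 ^ k2' = r * (4 ^ k1 * 2 ^ k2))%N ->
  plotkin_two_weight (ext_code C) k1' k2' (r * m) A.
Proof.
case=> CL CT PC MD TW AW cardC CT' card'.
have N_gt0 := min_lee_dist_gt0 MD.
split.
- exact: Z4_linear_ext.
- exact: CT'.
- exact: projective_ext.
- exact: min_lee_dist_ext N_gt0 TW MD.
- exact: two_weights_ext.
- by rewrite (A_w_ext N_gt0 TW).
- rewrite (card_code_type CT') card' -(card_code_type CT).
  apply: leq_trans (_ : r * N.+2 <= _)%N; last by rewrite leq_mul2l cardC orbT.
  by rewrite !mulnS; have := r_gt1; lia.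
Qed.

End Extension.

Lemma lee_line4 (x u : 'Z_4) : 1 * u != 0 ->
  (\sum_(j < 4) leeZ4 (x + 1 * u * j%:R)%R)%N = 4%N.
Proof. by rewrite !big_ord_recr big_ord0 /=; case_Z4 x; case_Z4 u. Qed.

Lemma lee_line2 (x u : 'Z_4) : 2%:R * u != 0 ->
  (\sum_(j < 2) leeZ4 (x + 2%:R * u * j%:R)%R)%N = 2%N.
Proof. by rewrite !big_ord_recr big_ord0 /=; case_Z4 x; case_Z4 u. Qed.

Lemma big_ord4 (R : Type) (idx : R) (op : Monoid.com_law idx) (F : 'I_4 -> R) :
  \big[op/idx]_(j < 4) F j =
  op (op (op (F (inord 0)) (F (inord 1))) (F (inord 2))) (F (inord 3)).
Proof.
rewrite !big_ord_recr big_ord0 /= Monoid.mul1m.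
by congr (op (op (op (F _) (F _)) (F _)) (F _)); apply: val_inj; rewrite /= inordK.
Qed.

Lemma big_ord2 (R : Type) (idx : R) (op : Monoid.com_law idx) (F : 'I_2 -> R) :
  \big[op/idx]_(j < 2) F j = op (F (inord 0)) (F (inord 1)).
Proof.
rewrite !big_ord_recr big_ord0 /= Monoid.mul1m.
by congr (op (F _) (F _)); apply: val_inj; rewrite /= inordK.
Qed.

Lemma lee_dual_column4_values (a b c d : 'Z_4) :
  a + b + c + d = 0 -> (a, b, c, d) != (0, 0, 0, 0) ->
  (2 <= leeZ4 a + leeZ4 b + leeZ4 c + leeZ4 d)%N /\
  ((leeZ4 a + leeZ4 b + leeZ4 c + leeZ4 d)%N = 2%N ->
   1 * (0%:R * a + 1%:R * b + 2%:R * c + 3%:R * d) != 0).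
Proof. by case_Z4 a; case_Z4 b; case_Z4 c; case_Z4 d. Qed.

Lemma lee_dual_column2_values (a b : 'Z_4) : a + b = 0 -> (a, b) != (0, 0) ->
  (2 <= leeZ4 a + leeZ4 b)%N /\
  ((leeZ4 a + leeZ4 b)%N = 2%N -> 2%:R * (0%:R * a + 1%:R * b) != 0).
Proof. by case_Z4 a; case_Z4 b. Qed.

Lemma lee_dual_column4 (y : 'I_4 -> 'Z_4) :
  \sum_j y j = 0 -> (exists j, y j != 0) ->
  (2 <= \sum_j leeZ4 (y j))%N /\
  ((\sum_j leeZ4 (y j))%N = 2%N -> 1 * \sum_(j < 4) j%:R * y j != 0).
Proof.
rewrite !big_ord4 !inordK // => sum0 [j yj0]; apply: lee_dual_column4_values => //.
apply: contra yj0 => /eqP[y0 y1 y2 y3]; apply/eqP.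
case: j => -[|[|[|[|?]]]] j_lt //;
  [rewrite -y0 | rewrite -y1 | rewrite -y2 | rewrite -y3];
  by congr y; apply: val_inj; rewrite /= inordK.
Qed.

Lemma lee_dual_column2 (y : 'I_2 -> 'Z_4) :
  \sum_j y j = 0 -> (exists j, y j != 0) ->
  (2 <= \sum_j leeZ4 (y j))%N /\
  ((\sum_j leeZ4 (y j))%N = 2%N -> 2%:R * \sum_(j < 2) j%:R * y j != 0).
Proof.
rewrite !big_ord2 !inordK // => sum0 [j yj0]; apply: lee_dual_column2_values => //.
apply: contra yj0 => /eqP[y0 y1]; apply/eqP.
case: j => -[|[|?]] j_lt //; [rewrite -y0 | rewrite -y1];
  by congr y; apply: val_inj; rewrite /= inordK.
Qed.

Lemma plotkin_two_weight_ext4 N (C : {set 'rV['Z_4]_N}) k1 k2 m A :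
  plotkin_two_weight C k1 k2 m A ->
  plotkin_two_weight (ext_code 4 1 C) k1.+1 k2 (4 * m) A.
Proof.
move=> HC; have N_gt0 := min_lee_dist_gt0 (ptw_min_dist HC).
apply: (plotkin_two_weight_ext (isT : 1 < 4)%N lee_line4 lee_dual_column4 HC); last first.
  by rewrite expnS mulnA.
pose g (p : 'rV['Z_4]_(1 + k1) * 'rV['Z_2]_k2) := ((rsubmx p.1, p.2), lsubmx p.1 0 0).
apply: (@code_type_ext 4 1 isT _ _ _ _ _ _ g N_gt0 (ptw_type HC)).
- by move=> [x y] [x' y']; rewrite /g /= !linearD /= mxE.
- move=> [x y] [x' y'] [e1 ->]; rewrite !mul1r /= => e.
  rewrite -(hsubmxK x) -(hsubmxK x') e1; congr (row_mx _ _, _).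
  by apply/matrixP => i j; rewrite !ord1.
- move=> [x y] u; exists (row_mx (const_mx u) x, y).
  by rewrite /g /= row_mxKr row_mxKl mxE.
Qed.

Definition lift_Z2 (v : 'Z_2) : 'Z_4 := (val v)%:R.

Lemma lift_Z2D (v w : 'Z_2) :
  2%:R * lift_Z2 (v + w) = 2%:R * (lift_Z2 v + lift_Z2 w).
Proof. by case: v => -[|[|?]] ?; case: w => -[|[|?]] ? //; apply/eqP. Qed.

Lemma lift_Z2_inj (v w : 'Z_2) : 2%:R * lift_Z2 v = 2%:R * lift_Z2 w -> v = w.
Proof. by case: v => -[|[|?]] ?; case: w => -[|[|?]] ? //= _; apply: val_inj. Qed.

Lemma lift_Z2_surj (u : 'Z_4) : exists v, 2%:R * u = 2%:R * lift_Z2 v.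
Proof. by case_Z4 u; [exists 0 | exists 1 | exists 0 | exists 1]; apply: val_inj. Qed.

Lemma plotkin_two_weight_ext2 N (C : {set 'rV['Z_4]_N}) k1 k2 m A :
  plotkin_two_weight C k1 k2 m A ->
  plotkin_two_weight (ext_code 2 2%:R C) k1 k2.+1 (2 * m) A.
Proof.
move=> HC; have N_gt0 := min_lee_dist_gt0 (ptw_min_dist HC).
apply: (plotkin_two_weight_ext (isT : 1 < 2)%N lee_line2 lee_dual_column2 HC); last first.
  by rewrite expnS mulnCA.
pose g (p : 'rV['Z_4]_k1 * 'rV['Z_2]_(1 + k2)) :=
  ((p.1, rsubmx p.2), lift_Z2 (lsubmx p.2 0 0)).
apply: (@code_type_ext 2 2%:R isT _ _ _ _ _ _ g N_gt0 (ptw_type HC)).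
- by move=> [x y] [x' y']; rewrite /g /= !linearD /= mxE lift_Z2D.
- move=> [x y] [x' y'] [-> e2] /lift_Z2_inj /= e.
  rewrite -(hsubmxK y) -(hsubmxK y') e2; congr (_, row_mx _ _).
  by apply/matrixP => i j; rewrite !ord1.
- move=> [x y] u; have [v ->] := lift_Z2_surj u.
  by exists (x, row_mx (const_mx v) y); rewrite /g /= row_mxKr row_mxKl mxE.
Qed.

Lemma plotkin_two_weight_cast N N' k1 k1' k2 k2' m m' A :
  N = N' -> k1 = k1' -> k2 = k2' -> m = m' ->
  (exists C : {set 'rV['Z_4]_N}, plotkin_two_weight C k1 k2 m A) ->
  exists C : {set 'rV['Z_4]_N'}, plotkin_two_weight C k1' k2' m' A.
Proof. by move=> <- <- <- <-. Qed.

Lemma plotkin_two_weight_iter N (C : {set 'rV['Z_4]_N}) k1 k2 m A a b :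
  plotkin_two_weight C k1 k2 m A ->
  exists C' : {set 'rV['Z_4]_(4 ^ a * 2 ^ b * N)},
    plotkin_two_weight C' (k1 + a) (k2 + b) (4 ^ a * 2 ^ b * m) A.
Proof.
move=> HC; elim: a => [|a [C' /plotkin_two_weight_ext4 HC']].
  elim: b => [|b [C' /plotkin_two_weight_ext2 HC']].
    by apply: plotkin_two_weight_cast (ex_intro _ C HC); rewrite ?mul1n ?addn0.
  by apply: plotkin_two_weight_cast (ex_intro _ _ HC'); rewrite ?expnS; lia.
by apply: plotkin_two_weight_cast (ex_intro _ _ HC'); rewrite ?expnS; lia.
Qed.

Lemma plotkin_two_weight_of_code N (C : {set 'rV['Z_4]_N}) k1 k2 m :
  Z4_linear C -> code_type C k1 k2 -> plotkin_optimal C -> projective C ->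
  min_lee_dist C N -> two_weights C m N -> plotkin_two_weight C k1 k2 m (A_w C m).
Proof. by move=> CL CT PO PC MD TW; split=> //; rewrite -plotkin_optimalE. Qed.

Lemma plotkin_two_weight_spec N (C : {set 'rV['Z_4]_N}) k1 k2 m A :
  plotkin_two_weight C k1 k2 m A ->
  [/\ Z4_linear C, code_type C k1 k2, plotkin_optimal C, projective C
    & min_lee_dist C N] /\
  [/\ two_weights C m N, A_w C m = A & A_w C N = (4 ^ k1 * 2 ^ k2 - 1 - A)%N].
Proof.
case=> CL CT PC MD TW AW cardC; split; split=> //; first by rewrite plotkin_optimalE.
by rewrite -(card_code_type CT) (card_two_weights CL TW) AW; lia.
Qed.

Theorem theorem5p4 (n k1 k2 m : nat) (C : {set 'rV['Z_4]_n}) (a b : nat) :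
  Z4_linear C -> code_type C k1 k2 -> plotkin_optimal C -> projective C ->
  min_lee_dist C n -> two_weights C m n ->
  (0 < a + b)%N ->
  exists C' : {set 'rV['Z_4]_(4 ^ a * 2 ^ b * n)},
    [/\ Z4_linear C', code_type C' (k1 + a) (k2 + b), plotkin_optimal C',
        projective C' & min_lee_dist C' (4 ^ a * 2 ^ b * n)] /\
    [/\ two_weights C' (4 ^ a * 2 ^ b * m) (4 ^ a * 2 ^ b * n),
        A_w C' (4 ^ a * 2 ^ b * m) = A_w C m &
        A_w C' (4 ^ a * 2 ^ b * n) = (4 ^ (k1 + a) * 2 ^ (k2 + b) - 1 - A_w C m)%N].
Proof.
(* With a = b = 0 the code C itself works. *)
move=> CL CT PO PC MD TW _.
have HC := plotkin_two_weight_of_code CL CT PO PC MD TW.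
have [C' HC'] := plotkin_two_weight_iter a b HC.
by exists C'; apply: plotkin_two_weight_spec.
Qed.
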